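(* Let $G$ be a connected triangle-free plane graph and let $f_0$ be the unbounded face of $G$. Assume that the boundary of $f_0$ is a cycle $C$ of length at most six, and that every vertex of $G$ not on $C$ has degree at least three. If $G\neq C$, then $G$ has either a tetragram, or a pentagram $(v_1,v_2,v_3,v_4,v_5)$ such that $v_1,v_2,v_3,v_4\notin V(C)$.
   Context: All graphs are finite and simple; a plane graph is a graph drawn in the plane without crossings. A cycle $F$ of a plane graph $G$ is called facial if it bounds a face of some connected component of $G$ (regardless of whether other components lie inside it). A tetragram in $G$ is a sequence $(v_1,v_2,v_3,v_4)$ of vertices forming a facial cycle in the order listed. A pentagram in $G$ is a sequence $(v_1,\dots,v_5)$ of vertices forming a facial cycle in the order listed such that $v_1,v_2,v_3,v_4$ all have degree exactly three in $G$. *)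

(* Plane graphs are encoded combinatorially as rotation
   systems (combinatorial maps) of genus 0. *)
From mathcomp Require Import all_boot.
Set Implicit Arguments. Unset Strict Implicit. Unset Printing Implicit Defensive.

Section PlaneMap.
Variables (V D : finType) (tl : D -> V) (a s : D -> D).
(* darts D; tl d = tail vertex of dart d; a = edge involution (reverse dart);
   s = rotation of darts around their tail vertex. *)

(* face permutation: follow dart d to its head, then rotate there *)
Definition phi (d : D) : D := s (a d).

Definition adj : rel V := fun u v => [exists d, (tl d == u) && (tl (a d) == v)].

Definition deg (v : V) : nat := #|[set d | tl d == v]|.

Definition connected_graph : Prop := forall u v, connect adj u v.

Definition triangle_free : Prop :=
  forall x y z, adj x y -> adj y z -> adj z x -> False.

Definition nfaces : nat := fcard phi D.

Definition plane_map : Prop :=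
  (forall d, a (a d) = d) /\
  (forall d, a d != d) /\
  injective s /\
  (forall d, tl (s d) = tl d) /\
  (forall d d', tl d = tl d' -> fconnect s d d') /\
  (forall d, tl (a d) != tl d) /\
  (forall d d', tl d = tl d' -> tl (a d) = tl (a d') -> d = d') /\
  2 * (#|V| + nfaces) = #|D| + 4 (* Euler's formula: genus 0 *).

Definition face_walk (d : D) (n : nat) : seq V := map tl (traject phi d n).

(* vs forms a facial cycle, in the order listed (either orientation,
   any starting point) *)
Definition facial_cycle (vs : seq V) : Prop :=
  exists d, [/\ order phi d = size vs, 2 < size vs, uniq vs &
    (face_walk d (size vs) = vs \/ rev (face_walk d (size vs)) = vs)].

Definition tetragram (v1 v2 v3 v4 : V) : Prop := facial_cycle [:: v1; v2; v3; v4].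

Definition pentagram (v1 v2 v3 v4 v5 : V) : Prop :=
  facial_cycle [:: v1; v2; v3; v4; v5] /\
  [/\ deg v1 = 3, deg v2 = 3, deg v3 = 3 & deg v4 = 3].

(* the face f0 (outer face) is the phi-orbit of d0; its boundary vertex
   sequence: *)
Definition outer_walk (d0 : D) : seq V := face_walk d0 (order phi d0).

Definition differs_from_face (d0 : D) : Prop :=
  (exists v, v \notin outer_walk d0) \/
  (exists d, d \notin orbit phi d0 /\ a d \notin orbit phi d0).

End PlaneMap.

From mathcomp Require Import all_boot zify.
From Stdlib Require Import Classical_Prop.
Set Implicit Arguments. Unset Strict Implicit. Unset Printing Implicit Defensive.

(* Discharging.  Suppose neither configuration exists.  Faces have length at
   least 4 (no triangles, no vertex of degree 1) and length 4 is a tetragram.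
   Call a dart a bonus dart if its tail is an inner vertex of degree 3, or if
   it runs backwards along C between two vertices of degree 2.  A 5-face
   carries at most three bonus darts: four in a row are all of one kind, and
   then they form a pentagram or force C to be that very face.  Hence every
   inner face f has 3|f| >= 12 + #(bonus darts on f), while the outer face has
   none.  On the vertex side 3 deg v + #(bonus darts at v) is at least 12 off C
   and sums to at least 7|C| + 1 along C.  Adding up and using Euler's formula
   2(|V| + |F|) = |D| + 4 yields 2|C| >= 13, contradicting |C| <= 6. *)

Section PlaneMap.
Variables (V D : finType) (tl : D -> V) (a s : D -> D).
Hypothesis hpm : plane_map tl a s.

Local Notation ph := (phi a s).
Local Notation dg := (deg tl).

Lemma aK : involutive a. Proof. by case: hpm. Qed.
Lemma s_inj : injective s. Proof. by case: hpm => _ [] _ []. Qed.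
Lemma tl_s d : tl (s d) = tl d. Proof. by case: hpm => _ [] _ [] _ []. Qed.

Lemma fconnect_s_tl d d' : tl d = tl d' -> fconnect s d d'.
Proof. by case: hpm => _ [] _ [] _ [] _ [] H _; apply: H. Qed.

Lemma tl_a_neq d : tl (a d) != tl d.
Proof. by case: hpm => _ [] _ [] _ [] _ [] _ [] H _. Qed.

Lemma tl2_inj d d' : tl d = tl d' -> tl (a d) = tl (a d') -> d = d'.
Proof. by case: hpm => _ [] _ [] _ [] _ [] _ [] _ [] H _; apply: H. Qed.

Lemma euler : 2 * (#|V| + nfaces a s) = #|D| + 4.
Proof. by case: hpm => _ [] _ [] _ [] _ [] _ [] _ [] _ H. Qed.

Lemma phi_inj : injective ph.
Proof. by move=> x y /s_inj /(can_inj aK). Qed.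

Lemma tl_phi d : tl (ph d) = tl (a d). Proof. exact: tl_s. Qed.

Lemma iter_order_phi x : iter (order ph x) ph x = x.
Proof. exact: (iter_order phi_inj). Qed.

Lemma order_iter_phi j x : order ph (iter j ph x) = order ph x.
Proof.
elim: j => //= j <-; apply: order_id_cycle; exact: (cycle_orbit phi_inj).
Qed.

Lemma degE v : dg v = #|[pred d | tl d == v]|.
Proof. by rewrite /deg cardsE. Qed.

Lemma deg_fixed_s d : s d = d -> dg (tl d) = 1.
Proof.
move=> sd; rewrite degE -(card1 d); apply: eq_card => d' /=.
rewrite inE; apply/eqP/eqP => [e|->//].
have /iter_findex <- := fconnect_s_tl (esym e).
by elim: (findex _ _ _) => //= k ->.
Qed.

Lemma adj_dart d : adj tl a (tl d) (tl (a d)).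
Proof. by apply/existsP; exists d; rewrite !eqxx. Qed.

End PlaneMap.

Section MinDegree.
Variables (V D : finType) (tl : D -> V) (a s : D -> D).
Hypothesis hpm : plane_map tl a s.
Hypothesis hdeg : forall v, 2 <= deg tl v.
Hypothesis htf : triangle_free tl a.

Local Notation ph := (phi a s).

Lemma phi_neq_a d : ph d != a d.
Proof.
by apply/eqP => /(deg_fixed_s hpm) e; have := hdeg (tl (a d)); rewrite e.
Qed.

Lemma tl_iter_phi_neq k d : 0 < k < 4 -> tl (iter k ph d) != tl d.
Proof.
case: k => [|[|[|[|k]]]] //= _.
- by rewrite (tl_phi hpm) (tl_a_neq hpm).
- apply/eqP => e; have /eqP := phi_neq_a d; apply.
  apply: (tl2_inj hpm); first by rewrite (tl_phi hpm).
  by rewrite (aK hpm) -e (tl_phi hpm).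
- apply/eqP => e; apply: (htf (x := tl d) (y := tl (ph d)) (z := tl (ph (ph d)))).
  + by rewrite (tl_phi hpm); apply: adj_dart.
  + by rewrite [X in adj _ _ _ X](tl_phi hpm); apply: adj_dart.
  + by rewrite -[X in adj _ _ _ X]e [X in adj _ _ _ X](tl_phi hpm); apply: adj_dart.
Qed.

Lemma order_phi_ge4 x : 4 <= order ph x.
Proof.
have := tl_iter_phi_neq (k := order ph x) x; rewrite (iter_order_phi hpm) eqxx.
by have := order_gt0 ph x; case: (order ph x) => [|[|[|[|k]]]] // _ /(_ isT).
Qed.

(* Two positions on a face of length at most 7 are at cyclic distance at most 3. *)
Lemma uniq_face_walk x : order ph x <= 7 -> uniq (face_walk tl a s x (order ph x)).
Proof.
move=> le7; set m := order ph x.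
have tl_iter_inj i j : i < j < m -> tl (iter i ph x) != tl (iter j ph x).
  case/andP=> lt_ij lt_jm; rewrite eq_sym.
  have [le_ji3|gt_ji3] := leqP (j - i) 3.
    by rewrite -(subnK (ltnW lt_ij)) iterD tl_iter_phi_neq // subn_gt0 lt_ij.
  have ->: iter i ph x = iter (m - (j - i)) ph (iter j ph x).
    rewrite -iterD -{1}(iter_order_phi hpm x) -iterD -/m; congr iter; lia.
  by rewrite eq_sym tl_iter_phi_neq //; lia.
apply/(uniqP (tl x)) => i j; rewrite !inE size_map size_traject => lt_im lt_jm.
rewrite !(nth_map x) ?size_traject // !nth_traject // => e.
case: (ltngtP i j) => // [lt_ij|lt_ji].
- by have := tl_iter_inj i j; rewrite lt_ij lt_jm e eqxx => /(_ isT).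
- by have := tl_iter_inj j i; rewrite lt_ji lt_im e eqxx => /(_ isT).
Qed.

Lemma facial_face_walk x :
  order ph x <= 7 -> facial_cycle tl a s (face_walk tl a s x (order ph x)).
Proof.
move=> le7; have sz : size (face_walk tl a s x (order ph x)) = order ph x.
  by rewrite size_map size_traject.
exists x; rewrite sz; split => //; last by left.
- exact: leq_trans (order_phi_ge4 x).
- exact: uniq_face_walk.
Qed.

End MinDegree.

Section Boundary.
Variables (V D : finType) (tl : D -> V) (a s : D -> D) (d0 : D).
Hypothesis hpm : plane_map tl a s.

Local Notation ph := (phi a s).
Local Notation dg := (deg tl).
Local Notation n := (order ph d0).
Local Notation C := (outer_walk tl a s d0).
Local Notation O := (orbit ph d0).

Definition bdart k := iter k ph d0.
Definition bvert k := tl (bdart k).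

Lemma bdart_mod k : bdart k = bdart (k %% n).
Proof.
have iter_mul q : iter (q * n) ph d0 = d0.
  by elim: q => // q IH; rewrite mulSn iterD IH (iter_order_phi hpm).
by rewrite /bdart {1}(divn_eq k n) addnC iterD iter_mul.
Qed.

Lemma bvert_mod k : bvert k = bvert (k %% n).
Proof. by rewrite /bvert bdart_mod. Qed.

Lemma bvert_addn k : bvert (k + n) = bvert k.
Proof. by rewrite bvert_mod modnDr -bvert_mod. Qed.

Lemma size_outer_walk : size C = n.
Proof. by rewrite size_map size_traject. Qed.

Lemma outer_walkE : C = map bvert (iota 0 n).
Proof.
apply: (eq_from_nth (x0 := tl d0)); first by rewrite size_outer_walk size_map size_iota.
move=> i; rewrite size_outer_walk => lt_in.
by rewrite (nth_map d0) ?size_traject // nth_traject // (nth_map 0) ?size_iota // nth_iota.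
Qed.

Lemma mem_outer_walk v : reflect (exists2 k, k < n & v = bvert k) (v \in C).
Proof.
rewrite outer_walkE; apply: (iffP mapP) => [[k]|[k lt_kn ->]].
  by rewrite mem_iota => /andP[_ lt_kn] ->; exists k.
by exists k; rewrite // mem_iota.
Qed.

Lemma bvert_in k : bvert k \in C.
Proof. by rewrite bvert_mod; apply/mem_outer_walk; exists (k %% n); rewrite ?ltn_mod. Qed.

Lemma mem_outer_orbit d : reflect (exists k, d = bdart k) (d \in O).
Proof.
apply: (iffP trajectP) => [[k _ ->]|[k ->]]; first by exists k.
by exists (k %% n); rewrite ?ltn_mod //; apply: bdart_mod.
Qed.

Lemma bdart_in k : bdart k \in O.
Proof. by apply/mem_outer_orbit; exists k. Qed.

Lemma tl_a_bdart k : tl (a (bdart k)) = bvert k.+1.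
Proof. by rewrite -(tl_phi hpm). Qed.

Lemma outer_bvert_addn m v : v \in C -> exists k, v = bvert (k + m).
Proof.
case/mem_outer_walk => j _ ->; exists (j + m * n - m).
have le_m : m <= m * n by rewrite leq_pmulr.
rewrite subnK ?(leq_trans le_m) ?leq_addl // (bvert_mod (_ + _)) addnC modnMDl.
by rewrite -bvert_mod.
Qed.

Hypothesis huniq : uniq C.
Hypothesis hn : 3 <= n.

Lemma bvert_inj k l : bvert k = bvert l -> k = l %[mod n].
Proof.
rewrite (bvert_mod k) (bvert_mod l) => e.
have lt_mod m : m %% n < size C by rewrite size_outer_walk ltn_mod.
apply/eqP; rewrite -(nth_uniq (tl d0) (lt_mod k) (lt_mod l)) //.
by rewrite outer_walkE !(nth_map 0) ?size_iota ?ltn_mod // !nth_iota ?ltn_mod // e.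
Qed.

Lemma bvert_neq k j : 0 < j < n -> bvert (k + j) != bvert k.
Proof.
case/andP=> j_gt0 lt_jn; apply/eqP => /bvert_inj /eqP.
rewrite -{2}[k]addn0 eqn_modDl mod0n modn_small //.
by move/eqP=> j0; rewrite j0 in j_gt0.
Qed.

Lemma a_bdart_notin k : a (bdart k) \notin O.
Proof.
apply/negP => /mem_outer_orbit [l e].
have /bvert_inj el : bvert k.+1 = bvert l by rewrite -tl_a_bdart e.
have {}e : a (bdart k) = bdart k.+1 by rewrite e bdart_mod -el -bdart_mod.
have := bvert_neq k (j := 2); rewrite (leq_trans _ hn) // addn2 => /(_ isT).
by rewrite -tl_a_bdart -/(bdart k.+1) -e (aK hpm) eqxx.
Qed.

Lemma deg_outer v : v \in C -> 2 <= dg v.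
Proof.
case/(outer_bvert_addn 1) => k ->; rewrite addn1 (degE tl); apply/card_gt1P.
exists (bdart k.+1), (a (bdart k)); rewrite !inE tl_a_bdart eqxx; split => //.
by apply: contraNneq (a_bdart_notin k) => <-; apply: bdart_in.
Qed.

Lemma darts_at_deg2 k d : dg (bvert k.+1) = 2 -> tl d = bvert k.+1 ->
  d = bdart k.+1 \/ d = a (bdart k).
Proof.
move=> d2 td; have [->|ne1] := eqVneq d (bdart k.+1); first by left.
have [->|ne2] := eqVneq d (a (bdart k)); first by right.
suff: 2 < dg (bvert k.+1) by rewrite d2.
rewrite (degE tl); apply/card_gt2P; exists d, (bdart k.+1), (a (bdart k)).
rewrite !inE td tl_a_bdart eqxx ne1; do !split => //; last by rewrite eq_sym.
by apply: contraNneq (a_bdart_notin k) => <-; apply: bdart_in.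
Qed.

Lemma phi_a_bdart k : dg (bvert k.+1) = 2 -> ph (a (bdart k.+1)) = a (bdart k).
Proof.
move=> d2; rewrite /phi (aK hpm).
have [/(deg_fixed_s hpm)|//] := darts_at_deg2 d2 (tl_s hpm _).
by rewrite -/(bvert k.+1) d2.
Qed.

Lemma tl_a_outer d : d \in O -> tl (a d) \in C.
Proof. by case/mem_outer_orbit => k ->; rewrite tl_a_bdart bvert_in. Qed.

(* If every vertex of C had degree 2, C would be a connected component of G,
   hence all of G. *)
Lemma exists_bvert_deg_gt2 : connected_graph tl a -> differs_from_face tl a s d0 ->
  exists k, 2 < dg (bvert k).
Proof.
move=> hcon hdf; case: (pickP [pred k : 'I_n | 2 < dg (bvert k)]) => [k hk|deg_le2].
  by exists k.
have deg2 k : dg (bvert k.+1) = 2.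
  apply/eqP; rewrite eqn_leq deg_outer ?bvert_in // andbT bvert_mod leqNgt.
  by have := deg_le2 (Ordinal (ltn_pmod k.+1 (order_gt0 ph d0))); move=> /= ->.
have darts d : tl d \in C -> d \in O \/ a d \in O.
  case/(outer_bvert_addn 1) => k; rewrite addn1 => /(darts_at_deg2 (deg2 k)) [->|->].
    by left; apply: bdart_in.
  by right; rewrite (aK hpm) bdart_in.
have closedC : closed (adj tl a) (mem C).
  move=> x y /existsP [d /andP [/eqP <- /eqP <-]]; apply/idP/idP => dC.
    by case: (darts d dC) => [/tl_a_outer //|/mem_outer_orbit [k ->]]; apply: bvert_in.
  case: (darts _ dC) => [/tl_a_outer|]; rewrite (aK hpm) // => /mem_outer_orbit [k ->].
  exact: bvert_in.
have allC v : v \in C by rewrite (closed_connect closedC (hcon v (bvert 0))) bvert_in.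
case: hdf => [[v]|[d [dO adO]]]; first by rewrite allC.
by case: (darts d (allC _)) => H; [rewrite H in dO | rewrite H in adO].
Qed.

End Boundary.

Lemma sum_card_fiber (T J : finType) (p : T -> J) (Q : pred J) (P : pred T) :
  (forall x, Q (p x)) ->
  \sum_(j | Q j) #|[pred x | (p x == j) && P x]| = #|[pred x | P x]|.
Proof.
move=> hQ; rewrite -sum1_card (partition_big p Q) //=.
apply: eq_bigr => j _; rewrite -sum1_card; apply: eq_bigl => x /=.
by rewrite andbC.
Qed.

Lemma sum_count_orbits (T : finType) (f : T -> T) (P : pred T) : injective f ->
  \sum_(r | froots f r) count P (orbit f r) = #|[pred x | P x]|.
Proof.
move=> inj_f; have fsym : connect_sym (frel f) := fconnect_sym inj_f.
rewrite -(sum_card_fiber P (@roots_root _ _ fsym)).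
apply: eq_bigr => r /eqP root_r.
rewrite -size_filter -(card_uniqP (filter_uniq _ (orbit_uniq f r))).
apply: eq_card => x; rewrite !inE mem_filter -fconnect_orbit andbC.
by rewrite -{2}root_r (root_connect fsym) fsym.
Qed.

Lemma sum_cycle5_le3 (b0 b1 b2 b3 b4 : bool) :
  ~~ [&& b0, b1, b2 & b3] -> ~~ [&& b1, b2, b3 & b4] -> ~~ [&& b2, b3, b4 & b0] ->
  ~~ [&& b3, b4, b0 & b1] -> ~~ [&& b4, b0, b1 & b2] ->
  b0 + b1 + b2 + b3 + b4 <= 3.
Proof. by case: b0; case: b1; case: b2; case: b3; case: b4. Qed.

Lemma sum_shift_periodic (f : nat -> nat) n : f n = f 0 ->
  \sum_(i < n) f i.+1 = \sum_(i < n) f i.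
Proof.
case: n => [|n] fn; first by rewrite !big_ord0.
by rewrite big_ord_recr big_ord_recl /= fn addnC.
Qed.

Section Discharging.
Variables (V D : finType) (tl : D -> V) (a s : D -> D) (d0 : D).

Local Notation ph := (phi a s).
Local Notation dg := (deg tl).
Local Notation n := (order ph d0).
Local Notation C := (outer_walk tl a s d0).
Local Notation O := (orbit ph d0).
Local Notation bdart := (bdart a s d0).
Local Notation bvert := (bvert tl a s d0).

Definition cubic_dart d := (tl d \notin C) && (dg (tl d) == 3).
Definition thin_dart d := [&& tl d \in C, d \notin O, dg (tl d) == 2 & dg (tl (a d)) == 2].
Definition bonus_dart d := cubic_dart d || thin_dart d.
Definition bonus_at v := #|[pred d | (tl d == v) && bonus_dart d]|.

Hypothesis hpm : plane_map tl a s.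
Hypothesis hcon : connected_graph tl a.
Hypothesis htf : triangle_free tl a.
Hypothesis hn : 3 <= n.
Hypothesis huniq : uniq C.
Hypothesis hint : forall v, v \notin C -> 3 <= dg v.
Hypothesis hdf : differs_from_face tl a s d0.

Lemma deg_ge2 v : 2 <= dg v.
Proof.
have [vC|vC] := boolP (v \in C); first exact: (deg_outer hpm huniq hn).
exact: leq_trans (hint vC).
Qed.

Lemma thin_dartE d k : thin_dart d -> tl d = bvert k.+1 -> d = a (bdart k).
Proof.
case/and4P=> _ dO d2 _ td; rewrite td in d2.
case: (darts_at_deg2 hpm huniq hn (eqP d2) td) => // ed.
by rewrite ed (bdart_in d0 hpm) in dO.
Qed.

Lemma thin_dart_step k : thin_dart (a (bdart k.+1)) ->
  dg (bvert k.+1) = 2 /\ ph (a (bdart k.+1)) = a (bdart k).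
Proof.
case/and4P=> _ _ _; rewrite (aK hpm) => /eqP d2.
by split => //; apply: (phi_a_bdart hpm huniq hn).
Qed.

Lemma thin_dart_tl_phi d : thin_dart d -> tl (ph d) \in C.
Proof.
move=> thin_d; have /and4P[dC _ _ _] := thin_d.
have [k] := outer_bvert_addn hpm 1 dC; rewrite addn1 => /(thin_dartE thin_d) ->.
by rewrite (tl_phi hpm) (aK hpm) (bvert_in d0 hpm).
Qed.

Lemma thin_dart_phi_tl d : thin_dart (ph d) -> tl d \in C.
Proof.
move=> thin_pd; have /and4P[pdC _ d2 _] := thin_pd.
have [k] := outer_bvert_addn hpm 1 pdC; rewrite addn1 => e.
have := thin_dartE thin_pd e; rewrite e in d2.
rewrite -(phi_a_bdart hpm huniq hn (eqP d2)) => /(phi_inj hpm) ->.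
by rewrite (tl_a_bdart d0 hpm) (bvert_in d0 hpm).
Qed.

(* Four thin darts in a row walk backwards along C, so a 5-face made of them
   closes up only if C has length 5 and all its vertices have degree 2. *)
Lemma no_four_thin x : order ph x = 5 ->
  ~~ [&& thin_dart x, thin_dart (ph x), thin_dart (ph (ph x)) & thin_dart (ph (ph (ph x)))].
Proof.
move=> o5; apply/negP => /and4P[t0 t1 t2 t3].
have /and4P[xC _ /eqP d5 _] := t0.
have [L eL] := outer_bvert_addn hpm 5 xC; rewrite !addnS addn0 in eL.
have x4 := thin_dartE t0 eL; rewrite eL in d5; rewrite x4 in t0 t1 t2 t3 o5.
have [d4 e1] := thin_dart_step t0; rewrite e1 in t1 t2 t3.
have [d3 e2] := thin_dart_step t1; rewrite e2 in t2 t3.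
have [d2 e3] := thin_dart_step t2; rewrite e3 in t3.
have [d1 e4] := thin_dart_step t3.
have closing : bvert (L + 5) = bvert (L + 0).
  have x5 : ph (ph (ph (ph (ph (a (bdart L.+4)))))) = a (bdart L.+4).
    by have := iter_order_phi hpm (a (bdart L.+4)); rewrite o5.
  move: x5; rewrite e1 e2 e3 e4 => /(congr1 tl).
  rewrite (tl_phi hpm) (aK hpm) (tl_a_bdart d0 hpm).
  by rewrite !addnS !addn0.
have n5 : n = 5.
  move/(bvert_inj hpm huniq)/eqP: closing.
  rewrite eqn_modDl mod0n => /eqP/eqP dvd_n5.
  have := dvdn_leq (isT : 0 < 5) dvd_n5; move: dvd_n5 hn.
  by case: (order _ _) => [|[|[|[|[|[|m]]]]]].
have [k] := exists_bvert_deg_gt2 hpm huniq hn hcon hdf.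
have -> : bvert k = bvert (L + ((k + 4 * L + 4) %% 5).+1).
  by rewrite (bvert_mod d0 hpm k) [RHS](bvert_mod d0 hpm) n5; congr bvert; lia.
have : (k + 4 * L + 4) %% 5 < 5 by rewrite ltn_mod.
case: (_ %% 5) => [|[|[|[|[|i]]]]] //= _; rewrite !addnS addn0.
- by rewrite d1.
- by rewrite d2.
- by rewrite d3.
- by rewrite d4.
- by rewrite d5.
Qed.

Hypothesis no_tetragram : ~ exists v1 v2 v3 v4, tetragram tl a s v1 v2 v3 v4.
Hypothesis no_pentagram : ~ exists v1 v2 v3 v4 v5, pentagram tl a s v1 v2 v3 v4 v5 /\
  [/\ v1 \notin C, v2 \notin C, v3 \notin C & v4 \notin C].

Lemma no_four_cubic x : order ph x = 5 ->
  ~~ [&& cubic_dart x, cubic_dart (ph x), cubic_dart (ph (ph x)) & cubic_dart (ph (ph (ph x)))].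
Proof.
move=> o5; apply/negP => /and4P[/andP[C0 /eqP g0] /andP[C1 /eqP g1]
  /andP[C2 /eqP g2] /andP[C3 /eqP g3]].
apply: no_pentagram; exists (tl x), (tl (ph x)), (tl (ph (ph x))), (tl (ph (ph (ph x)))).
exists (tl (ph (ph (ph (ph x))))); do 2 (split; last by split).
by have := facial_face_walk hpm deg_ge2 htf (x := x); rewrite o5 => /(_ isT).
Qed.

(* A cubic dart has its tail off C and a thin dart has both ends on C, so
   consecutive bonus darts are of the same kind. *)
Lemma no_four_bonus x : order ph x = 5 ->
  ~~ [&& bonus_dart x, bonus_dart (ph x), bonus_dart (ph (ph x)) & bonus_dart (ph (ph (ph x)))].
Proof.
move=> o5; apply/negP => /and4P[b0 b1 b2 b3].
have cubic_next y : cubic_dart y -> bonus_dart (ph y) -> cubic_dart (ph y).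
  by case/andP=> yC _ /orP[//|/thin_dart_phi_tl]; rewrite (negbTE yC).
have thin_next y : thin_dart y -> bonus_dart (ph y) -> thin_dart (ph y).
  by move/thin_dart_tl_phi => yC /orP[/andP[]|//]; rewrite yC.
case/orP: b0 => [c0|t0].
- have c1 := cubic_next _ c0 b1; have c2 := cubic_next _ c1 b2.
  have c3 := cubic_next _ c2 b3.
  by have /negP := no_four_cubic o5; apply; apply/and4P.
- have t1 := thin_next _ t0 b1; have t2 := thin_next _ t1 b2.
  have t3 := thin_next _ t2 b3.
  by have /negP := no_four_thin o5; apply; apply/and4P.
Qed.

Lemma face_charge x : 12 + count bonus_dart (orbit ph x) <= 3 * order ph x.
Proof.
have := order_phi_ge4 hpm deg_ge2 htf x; rewrite leq_eqVlt => /orP[/eqP o4|].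
  case: no_tetragram; have := facial_face_walk hpm deg_ge2 htf (x := x).
  by rewrite -o4 => /(_ isT) F; do 4 eexists; exact: F.
rewrite leq_eqVlt => /orP[/eqP o5|o6]; last first.
  by have := count_size bonus_dart (orbit ph x); rewrite size_orbit; lia.
have x5 : ph (ph (ph (ph (ph x)))) = x.
  by have := iter_order_phi hpm x; rewrite -o5.
have B j := no_four_bonus (etrans (order_iter_phi hpm j x) (esym o5)).
move: (B 0) (B 1) (B 2) (B 3) (B 4) => /=; rewrite !x5 => B0 B1 B2 B3 B4.
have := sum_cycle5_le3 B0 B1 B2 B3 B4.
by rewrite /orbit -o5 /=; lia.
Qed.

Lemma outer_no_bonus d : d \in O -> ~~ bonus_dart d.
Proof.
case/(mem_outer_orbit d0 hpm) => k ->; have := bvert_in d0 hpm k.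
by rewrite /bonus_dart /cubic_dart /thin_dart /bvert (bdart_in d0 hpm) => ->.
Qed.

Lemma inner_vertex_charge v : v \notin C -> 12 <= 3 * dg v + bonus_at v.
Proof.
move=> vC; have := hint vC; rewrite leq_eqVlt => /orP[/eqP d3|]; last lia.
suff -> : bonus_at v = dg v by rewrite -d3.
rewrite (degE tl) /bonus_at; apply: eq_card => d; rewrite !inE.
by have [e|//] := eqVneq (tl d) v; rewrite /bonus_dart /cubic_dart e vC -d3 eqxx.
Qed.

(* A boundary vertex of degree 2 whose predecessor on C also has degree 2
   carries the thin dart running back along C. *)
Lemma boundary_vertex_charge k :
  7 + 2 * (2 < dg (bvert k.+1)) <=
  3 * dg (bvert k.+1) + bonus_at (bvert k.+1) + (2 < dg (bvert k)).
Proof.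
case: (ltnP 2 (dg (bvert k.+1))) => [|le2] /=; first lia.
have d2 : dg (bvert k.+1) = 2 by apply/eqP; rewrite eqn_leq le2 deg_ge2.
case: (ltnP 2 (dg (bvert k))) => [_|le2']; first by rewrite d2 /=; lia.
have d2' : dg (bvert k) = 2 by apply/eqP; rewrite eqn_leq le2' deg_ge2.
suff: 0 < bonus_at (bvert k.+1) by rewrite d2; lia.
apply/card_gt0P; exists (a (bdart k)); rewrite !inE (tl_a_bdart d0 hpm) eqxx /=.
rewrite /bonus_dart /thin_dart (tl_a_bdart d0 hpm) (bvert_in d0 hpm).
by rewrite (a_bdart_notin hpm huniq hn) d2 (aK hpm) -/(bvert k) d2' orbT.
Qed.

Lemma boundary_charge : 7 * n + 1 <= \sum_(v in C) (3 * dg v + bonus_at v).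
Proof.
rewrite -big_uniq // outer_walkE big_map -(subn0 n) -/(index_iota 0 _) big_mkord subn0.
pose w i := 3 * dg (bvert i) + bonus_at (bvert i).
pose e i : nat := 2 < dg (bvert i).
change (7 * n + 1 <= \sum_(i < n) w i).
have bvert_n : bvert n = bvert 0 by rewrite -(bvert_addn d0 hpm 0).
have sum_w : \sum_(i < n) w i.+1 = \sum_(i < n) w i.
  by apply: sum_shift_periodic; rewrite /w bvert_n.
have sum_e : \sum_(i < n) e i.+1 = \sum_(i < n) e i.
  by apply: sum_shift_periodic; rewrite /e bvert_n.
have [k hk] := exists_bvert_deg_gt2 hpm huniq hn hcon hdf.
have e_pos : 0 < \sum_(i < n) e i.
  rewrite (bigD1 (Ordinal (ltn_pmod k (order_gt0 ph d0)))) //= /e.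
  by rewrite -(bvert_mod d0 hpm) hk.
have : \sum_(i < n) (7 + 2 * e i.+1) <= \sum_(i < n) (w i.+1 + e i).
  by apply: leq_sum => i _; apply: boundary_vertex_charge.
rewrite [X in X <= _]big_split [X in _ <= X]big_split -big_distrr.
rewrite big_const_ord iter_addn_0 sum_w sum_e /=.
set E := \sum_(i < n) e i; set W := \sum_(i < n) w i; lia.
Qed.

Lemma face_charge_sum :
  12 * nfaces a s + 3 * n + #|[pred d | bonus_dart d]| <= 3 * #|D| + 12.
Proof.
have fsym : connect_sym (frel ph) := fconnect_sym (phi_inj hpm).
pose r0 := froot ph d0.
have d0r0 : fconnect ph d0 r0 := connect_root _ d0.
have order_r0 : order ph r0 = n.
  by have /iter_findex <- := d0r0; apply: (order_iter_phi hpm).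
have count_r0 : count bonus_dart (orbit ph r0) = 0.
  apply/eqP; rewrite -leqn0 leqNgt -has_count; apply/hasPn => d.
  rewrite -!fconnect_orbit => /(connect_trans d0r0).
  by rewrite fconnect_orbit; apply: outer_no_bonus.
have sum_order : \sum_(r | froots ph r) 3 * order ph r = 3 * #|D|.
  rewrite -big_distrr -(sum_count_orbits predT (phi_inj hpm)) /=.
  by congr (_ * _); apply: eq_bigr => r _; rewrite count_predT size_orbit.
have nfacesE : nfaces a s = \sum_(r | froots ph r) 1.
  by rewrite sum1_card; apply: eq_card => r; rewrite !inE andbT.
have inner : \sum_(r | froots ph r && (r != r0)) (12 + count bonus_dart (orbit ph r))
           <= \sum_(r | froots ph r && (r != r0)) 3 * order ph r.
  by apply: leq_sum => r _; apply: face_charge.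
rewrite nfacesE -sum_order -(sum_count_orbits bonus_dart (phi_inj hpm)).
rewrite !(bigD1 r0 (roots_root fsym d0)) /= order_r0 count_r0.
rewrite big_split sum_nat_const -big_distrr /= in inner.
rewrite sum1_card -big_distrr /=; lia.
Qed.

Lemma vertex_charge_sum :
  12 * #|V| + 1 <= 3 * #|D| + #|[pred d | bonus_dart d]| + 5 * n.
Proof.
have sum_deg : \sum_v dg v = #|D|.
  rewrite -(sum_card_fiber (p := tl) (Q := xpredT) xpredT (fun _ => isT)).
  by apply: eq_bigr => v _; rewrite (degE tl); apply: eq_card => d; rewrite !inE andbT.
have sum_bonus : \sum_v bonus_at v = #|[pred d | bonus_dart d]|.
  exact: (sum_card_fiber (p := tl) (Q := xpredT) bonus_dart (fun _ => isT)).
have card_C : #|C| = n by rewrite (card_uniqP huniq) size_outer_walk.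
have inner : 12 * #|[predC C]| <= \sum_(v | v \notin C) (3 * dg v + bonus_at v).
  rewrite -sum1_card big_distrr /=; apply: leq_sum => v vC; rewrite muln1.
  exact: inner_vertex_charge.
have total : \sum_v (3 * dg v + bonus_at v) = 3 * #|D| + #|[pred d | bonus_dart d]|.
  by rewrite big_split -big_distrr /= sum_deg sum_bonus.
rewrite (bigID (mem C)) /= in total.
have cardV : #|C| + #|[predC C]| = #|V|.
  by rewrite -(cardC (mem C)); congr (_ + _); apply: eq_card.
rewrite card_C in cardV; move: boundary_charge inner total cardV.
set SC := \sum_(v in C) _; set SN := \sum_(v | v \notin C) _.
set K := #|[predC C]|; set B := #|[pred d | bonus_dart d]|.
set N := #|D|; set NV := #|V|; lia.
Qed.

(* Euler's formula turns the two charge bounds into [13 <= 2 * n]. *)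
Lemma outer_face_long : 7 <= n.
Proof.
have := face_charge_sum; have := vertex_charge_sum; have := euler hpm; lia.
Qed.

End Discharging.

Theorem lemma2p1 (V D : finType) (tl : D -> V) (a s : D -> D) (d0 : D) :
  plane_map tl a s ->
  connected_graph tl a ->
  triangle_free tl a ->
  3 <= size (outer_walk tl a s d0) <= 6 ->
  uniq (outer_walk tl a s d0) ->
  (forall v, v \notin outer_walk tl a s d0 -> 3 <= deg tl v) ->
  differs_from_face tl a s d0 ->
  (exists v1 v2 v3 v4, tetragram tl a s v1 v2 v3 v4) \/
  (exists v1 v2 v3 v4 v5, pentagram tl a s v1 v2 v3 v4 v5 /\
     [/\ v1 \notin outer_walk tl a s d0, v2 \notin outer_walk tl a s d0,
         v3 \notin outer_walk tl a s d0 & v4 \notin outer_walk tl a s d0]).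
Proof.
move=> hpm hcon htf; rewrite size_outer_walk => /andP[hn n_le6] huniq hint hdf.
case: (classic (exists v1 v2 v3 v4, tetragram tl a s v1 v2 v3 v4)) => [|no_tet].
  by left.
right; apply: NNPP => no_pent.
have := outer_face_long hpm hcon htf hn huniq hint hdf no_tet no_pent.
by rewrite leqNgt ltnS n_le6.
Qed.
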